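(* Every BCK-algebra $\mathcal A$ of order $n$ satisfies $\operatorname{cd}(\mathcal A)\ge\frac{3n-2}{n^2}$, and for each $n\ge3$ this bound is attained: the algebra $\mathcal M_n$ defined by $\mathcal M_3=\mathcal{PI}$ and $\mathcal M_n=\mathcal M_{n-1}\oplus\top$ for $n>3$ is a (linear) BCK-algebra of order $n$ with $\operatorname{cd}(\mathcal M_n)=\frac{3n-2}{n^2}$.
   Context: A BCK-algebra is a set $A$ with a binary operation $\cdot$ and a constant $0$ such that for all $x,y,z\in A$: (BCK1) $((x\cdot y)\cdot(x\cdot z))\cdot(z\cdot y)=0$; (BCK2) $(x\cdot(x\cdot y))\cdot y=0$; (BCK3) $x\cdot x=0$; (BCK4) $0\cdot x=0$; (BCK5) $x\cdot y=0$ and $y\cdot x=0$ imply $x=y$. The order $x\le y$ iff $x\cdot y=0$; the algebra is linear if this order is a chain. Define $x\wedge y:=y\cdot(y\cdot x)$; for finite $\mathcal A$, $\operatorname{cd}(\mathcal A)=|\{(x,y)\in A^2:x\wedge y=y\wedge x\}|/|A|^2$. $\mathcal{PI}$ is the BCK-algebra on $\{0,1,2\}$ with $1\cdot0=1$, $2\cdot0=2$, $2\cdot1=2$ and all other products $0$. Iséki's extension $\mathcal A\oplus\top$ adjoins a new element $\top$ with $x\cdot\top=0$, $\top\cdot\top=0$, $\top\cdot x=\top$ for $x\in A$. *)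

From mathcomp Require Import all_boot all_order all_algebra.
Set Implicit Arguments. Unset Strict Implicit. Unset Printing Implicit Defensive.
Import Order.TTheory GRing.Theory Num.Theory.

Section BCK.
Variables (T : finType) (op : T -> T -> T) (zero : T).

Definition is_BCK : Prop :=
  [/\ (forall x y z, op (op (op x y) (op x z)) (op z y) = zero),
      (forall x y, op (op x (op x y)) y = zero),
      (forall x, op x x = zero),
      (forall x, op zero x = zero) &
      (forall x y, op x y = zero -> op y x = zero -> x = y)].

Definition bck_le (x y : T) : bool := op x y == zero.

Definition bck_linear : Prop := forall x y, bck_le x y || bck_le y x.

Definition bck_meet (x y : T) : T := op y (op y x).

Definition cd : rat :=
  (#|[set p : T * T | bck_meet p.1 p.2 == bck_meet p.2 p.1]|%:R
    / (#|T| ^ 2)%:R)%R.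
End BCK.

Definition pi_op (x y : nat) : nat :=
  match x, y with
  | 1, 0 => 1
  | 2, 0 => 2
  | 2, 1 => 2
  | _, _ => 0
  end.

(* Operation of M_n on {0,...,n-1}: M_3 = PI and M_(m+1) = M_m (+) T
   where the new top element is m (the largest index). *)
Fixpoint mop (n : nat) (x y : nat) : nat :=
  match n with
  | 0 => pi_op x y
  | m.+1 =>
      if m < 3 then pi_op x y
      else if x == m then (if y == m then 0 else m)
      else if y == m then 0
      else mop m x y
  end.

(* M_n as an operation on 'I_n (the result always lies below n for n >= 3;
   insubd is only a totality device). *)
Definition Mop (n : nat) (x y : 'I_n) : 'I_n := insubd x (mop n x y).

(** The pairs (x, x), (0, x), (x, 0) always commute for the meet, since x * 0 = x and
    0 * x = x * x = 0; there are 3n - 2 of them, which gives the lower bound.  M_n is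
    the chain 0 < 1 < ... < n-1 with x * y = 0 for x <= y and x * y = x otherwise; there
    x /\ y is y if y <= x and 0 if x < y, so two distinct elements commute only when one
    of them is 0. *)
From mathcomp Require Import all_boot all_order all_algebra zify.
Import Order.TTheory GRing.Theory Num.Theory.

Set Implicit Arguments. Unset Strict Implicit. Unset Printing Implicit Defensive.

Definition trivial_pairs (T : finType) (z : T) : {set T * T} :=
  [set p | [|| p.1 == p.2, p.1 == z | p.2 == z]].

Lemma card_trivial_pairs (T : finType) (z : T) :
  #|trivial_pairs z| = 3 * #|T| - 2.
Proof.
have n_gt0 : 0 < #|T| by apply/card_gt0P; exists z.
pose diag := [set (x, x) | x : T].
have diagP a b : ((a, b) \in diag) = (a == b).
  apply/imsetP/eqP => [[x _ [-> ->]] // | <-]; by exists a.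
have -> : trivial_pairs z = diag :|: (setX [set z] setT :|: setX setT [set z]).
  by apply/setP => -[a b]; rewrite !inE diagP /= andbT.
have axes_meet : setX [set z] [set: T] :&: setX [set: T] [set z] = [set (z, z)].
  by apply/setP => -[a b]; rewrite !inE /= andbT.
have diag_meet : diag :&: (setX [set z] setT :|: setX setT [set z]) = [set (z, z)].
  apply/setP => -[a b]; rewrite !inE diagP /= !andbT xpair_eqE.
  case: (a =P b) => [<-|a_neq_b] /=; first by rewrite orbb andbb.
  by apply/esym/negbTE; apply: contra_notN a_neq_b => /andP[/eqP -> /eqP ->].
have card_diag : #|diag| = #|T| by rewrite card_imset // => x y [].
by rewrite !cardsU !cardsX !cards1 cardsT card_diag axes_meet diag_meet !cards1; lia.
Qed.

Lemma trivial_pairs_ratio (T : finType) (z : T) :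
  (#|trivial_pairs z|%:R / (#|T| ^ 2)%:R : rat)%R
  = ((3 * #|T|%:R - 2) / #|T|%:R ^+ 2)%R.
Proof.
have n_gt0 : 0 < #|T| by apply/card_gt0P; exists z.
by rewrite card_trivial_pairs natrX natrB ?natrM //; lia.
Qed.

Section BCKAlgebra.
Variables (T : finType) (op : T -> T -> T) (zero : T).
Hypothesis opBCK : is_BCK op zero.

Lemma bck_op_x0 x : op x zero = x.
Proof.
case: opBCK => _ bck2 bckxx bck0x bck5.
have x_0 : op x (op x zero) = zero by apply: bck5; [apply: bck2 | apply: bck0x].
by apply: bck5 => //; have := bck2 x x; rewrite bckxx.
Qed.

Lemma trivial_pairs_meet_comm :
  trivial_pairs zero \subset [set p | bck_meet op p.1 p.2 == bck_meet op p.2 p.1].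
Proof.
case: opBCK => _ _ bckxx bck0x _.
apply/subsetP => -[a b]; rewrite !inE /bck_meet /=.
by case/or3P => /eqP ->; rewrite ?eqxx ?bck_op_x0 ?bckxx ?bck0x.
Qed.

Lemma cd_ge_trivial_pairs :
  (#|trivial_pairs zero|%:R / (#|T| ^ 2)%:R <= cd op)%R.
Proof.
rewrite /cd ler_wpM2r ?invr_ge0 // ler_nat.
exact/subset_leq_card/trivial_pairs_meet_comm.
Qed.

End BCKAlgebra.

Definition chain_op (x y : nat) : nat := if x <= y then 0 else x.

(* Split on innermost conditionals first, so that lia only ever sees atomic comparisons. *)
Ltac chain_op_cases :=
  rewrite /chain_op; repeat match goal with |- context [if ?c then _ else _] =>
    lazymatch c with context [if _ then _ else _] => fail
    | _ => case: (boolP c) => ? end end; lia.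

Lemma chain_op_bck1 x y z :
  chain_op (chain_op (chain_op x y) (chain_op x z)) (chain_op z y) = 0.
Proof. chain_op_cases. Qed.

Lemma chain_op_bck2 x y : chain_op (chain_op x (chain_op x y)) y = 0.
Proof. chain_op_cases. Qed.

Lemma chain_opxx x : chain_op x x = 0.
Proof. chain_op_cases. Qed.

Lemma chain_op0x x : chain_op 0 x = 0.
Proof. chain_op_cases. Qed.

Lemma chain_op_antisym x y : chain_op x y = 0 -> chain_op y x = 0 -> x = y.
Proof. chain_op_cases. Qed.

Lemma chain_op_total x y : (chain_op x y == 0) || (chain_op y x == 0).
Proof. chain_op_cases. Qed.

Lemma chain_op_meet_comm x y :
  (chain_op y (chain_op y x) == chain_op x (chain_op x y))
  = [|| x == y, x == 0 | y == 0].
Proof. chain_op_cases. Qed.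

Lemma mop_chain n x y : 3 <= n -> x < n -> y < n -> mop n x y = chain_op x y.
Proof.
rewrite /chain_op; elim: n x y => [//|m IH] x y n_ge3 x_lt y_lt /=.
case: ltnP => m_ge3.
  have m2 : m = 2 by lia.
  by subst m; move: x y x_lt y_lt => [|[|[|x]]] [|[|[|y]]].
case: eqP => [->|/eqP x_neq]; case: eqP => [->|/eqP y_neq] //=.
- by rewrite leqnn.
- by case: leqP => //; lia.
- by case: leqP => //; lia.
- by rewrite IH //; lia.
Qed.

Section ChainModel.
Variables (n : nat) (z : 'I_n).
Hypotheses (n_ge3 : 3 <= n) (z0 : nat_of_ord z = 0).

Lemma val_Mop (x y : 'I_n) : val (Mop x y) = chain_op x y.
Proof.
rewrite /Mop val_insubd mop_chain //.
suff -> : chain_op x y < n by [].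
by rewrite /chain_op; case: (leqP x y) => _; [lia | exact: ltn_ord].
Qed.

Lemma Mop_eq (x y u : 'I_n) :
  (Mop x y == u) = (chain_op x y == u).
Proof. by rewrite -val_eqE val_Mop. Qed.

Lemma Mop_BCK : is_BCK (@Mop n) z.
Proof.
split=> [x y w | x y | x | x | x y].
- by apply/eqP; rewrite Mop_eq !val_Mop z0 chain_op_bck1.
- by apply/eqP; rewrite Mop_eq !val_Mop z0 chain_op_bck2.
- by apply/eqP; rewrite Mop_eq z0 chain_opxx.
- by apply/eqP; rewrite Mop_eq z0 chain_op0x.
- move=> /eqP; rewrite Mop_eq z0 => /eqP xy0 /eqP; rewrite Mop_eq z0 => /eqP yx0.
  exact/val_inj/chain_op_antisym.
Qed.

Lemma Mop_linear : bck_linear (@Mop n) z.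
Proof. by move=> x y; rewrite /bck_le !Mop_eq z0 chain_op_total. Qed.

Lemma Mop_meet_comm :
  [set p | bck_meet (@Mop n) p.1 p.2 == bck_meet (@Mop n) p.2 p.1] = trivial_pairs z.
Proof.
apply/setP => -[a b]; rewrite !inE /bck_meet /= -val_eqE !val_Mop.
by rewrite chain_op_meet_comm -!val_eqE /= z0.
Qed.

End ChainModel.

Theorem theorem5p6 :
  (forall (T : finType) (op : T -> T -> T) (zero : T),
     is_BCK op zero ->
     ((3 * #|T|%:R - 2) / (#|T|%:R ^+ 2) <= cd op)%R)
  /\
  (forall (n : nat) (z : 'I_n), 3 <= n -> nat_of_ord z = 0 ->
     [/\ is_BCK (@Mop n) z, bck_linear (@Mop n) z &
         cd (@Mop n) = ((3 * n%:R - 2) / (n%:R ^+ 2) : rat)%R]).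
Proof.
split=> [T op zero opBCK | n z n_ge3 z0].
  by rewrite -(trivial_pairs_ratio zero); exact: cd_ge_trivial_pairs.
split; [exact: Mop_BCK | exact: Mop_linear |].
by rewrite /cd (Mop_meet_comm n_ge3 z0) trivial_pairs_ratio card_ord.
Qed.
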